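(* A Q-net $f:\mathbb Z^m\to\mathbb R^N$ is a discrete Koenigs net if and only if there exists a function $\nu:\mathbb Z^m\to\mathbb R\setminus\{0\}$ such that for every elementary quadrilateral $(f,f_i,f_{ij},f_j)$, with $M=(ff_{ij})\cap(f_if_j)$ the intersection point of its diagonals, $$\frac{\nu_{ij}}{\nu}=\frac{l(M,f_{ij})}{l(M,f)},\qquad \frac{\nu_j}{\nu_i}=\frac{l(M,f_j)}{l(M,f_i)}.$$ Such a $\nu$ is unique up to multiplication by one nonzero constant on the black points and another nonzero constant on the white points of $\mathbb Z^m$.
   Context: Let $N\ge 3$, $m\ge 2$. For a map $f:\mathbb Z^m\to\mathbb R^N$, write $e_i$ for the $i$-th unit vector of $\mathbb Z^m$, $f=f(u)$, $f_i=f(u+e_i)$, $f_{ij}=f(u+e_i+e_j)$; similarly $\nu_i=\nu(u+e_i)$, $\nu_{ij}=\nu(u+e_i+e_j)$; $\delta_i f=f_i-f$. A Q-net is a map $f:\mathbb Z^m\to\mathbb R^N$ such that for every $u$ and $i\ne j$ the elementary quadrilateral $(f,f_i,f_{ij},f_j)$ is planar; elementary quadrilaterals are assumed non-degenerate: four distinct vertices, no three collinear, and the diagonals $(ff_{ij})$, $(f_if_j)$ meet in a point $M$ different from all vertices. Two planar quadrilaterals $(A,B,C,D)$, $(A^*,B^*,C^*,D^* )$ are dual if corresponding sides are parallel ($A^*B^*\parallel AB$, $B^*C^*\parallel BC$, $C^*D^*\parallel CD$, $D^*A^*\parallel DA$) and non-corresponding diagonals are parallel ($A^*C^*\parallel BD$,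 $B^*D^*\parallel AC$). A Q-net $f$ is a discrete Koenigs net if there is a Q-net $f^*$ (a dual net) such that each $(f^*,f^*_i,f^*_{ij},f^*_j)$ is dual to $(f,f_i,f_{ij},f_j)$, i.e. $\delta_if^*\parallel\delta_if$, $\delta_jf^*\parallel\delta_jf$, $f^*_{ij}-f^*\parallel f_i-f_j$, $f^*_i-f^*_j\parallel f_{ij}-f$. For collinear points $P,Q$, $l(P,Q)$ denotes the directed (signed) length along their line (ratios of such lengths on one line are orientation-independent). A point $u\in\mathbb Z^m$ is black if $u_1+\dots+u_m$ is even, white otherwise. *)

From HB Require Import structures.
From mathcomp Require Import all_boot all_order all_algebra.
Set Implicit Arguments. Unset Strict Implicit. Unset Printing Implicit Defensive.
Import Order.TTheory GRing.Theory Num.Theory.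
Local Open Scope ring_scope.

Section Defs.
Variable R : realFieldType.
Variable N : nat.
Notation pt := 'rV[R]_N.

Definition shift (m : nat) (u : 'rV[int]_m) (i : 'I_m) : 'rV[int]_m :=
  u + delta_mx ord0 i.

Definition black (m : nat) (u : 'rV[int]_m) : bool :=
  (2%:Z %| \sum_(k < m) u ord0 k)%Z.

Definition parallel (a b : pt) : Prop :=
  a != 0 /\ b != 0 /\ exists k : R, a = k *: b.

Definition collinear3 (A B C : pt) : Prop :=
  (\rank (col_mx (B - A) (C - A)) <= 1)%N.

Definition planar4 (A B C D : pt) : Prop :=
  (\rank (col_mx (B - A) (col_mx (C - A) (D - A))) <= 2)%N.

Definition on_line (X P Q : pt) : Prop :=
  exists t : R, X = P + t *: (Q - P).

Definition nondeg_quad (A B C D : pt) : Prop :=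
  [/\ [/\ A != B, A != C, A != D & [/\ B != C, B != D & C != D]],
      [/\ ~ collinear3 A B C, ~ collinear3 A B D, ~ collinear3 A C D
        & ~ collinear3 B C D] &
      exists M : pt, [/\ on_line M A C, on_line M B D &
                         [/\ M != A, M != B, M != C & M != D]]].

Definition Qnet (m : nat) (f : 'rV[int]_m -> pt) : Prop :=
  forall (u : 'rV[int]_m) (i j : 'I_m), i != j ->
    planar4 (f u) (f (shift u i)) (f (shift (shift u i) j)) (f (shift u j)) /\
    nondeg_quad (f u) (f (shift u i)) (f (shift (shift u i) j)) (f (shift u j)).

Definition dual_quad (A B C D A' B' C' D' : pt) : Prop :=
  [/\ parallel (B' - A') (B - A), parallel (C' - B') (C - B),
      parallel (D' - C') (D - C), parallel (A' - D') (A - D) &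
      parallel (C' - A') (D - B) /\ parallel (D' - B') (C - A)].

Definition Koenigs (m : nat) (f : 'rV[int]_m -> pt) : Prop :=
  exists fs : 'rV[int]_m -> pt, Qnet fs /\
    forall (u : 'rV[int]_m) (i j : 'I_m), i != j ->
      dual_quad (f u) (f (shift u i)) (f (shift (shift u i) j)) (f (shift u j))
                (fs u) (fs (shift u i)) (fs (shift (shift u i) j)) (fs (shift u j)).

(* For collinear points M, P, Q with Q <> M, the ratio of directed lengths
   l(M,P)/l(M,Q) equals r iff P - M = r (Q - M). *)
Definition lratio_is (M P Q : pt) (r : R) : Prop :=
  P - M = r *: (Q - M).

Definition nu_cond (m : nat) (f : 'rV[int]_m -> pt) (nu : 'rV[int]_m -> R) : Prop :=
  (forall u, nu u != 0) /\
  forall (u : 'rV[int]_m) (i j : 'I_m), i != j ->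
    forall M : pt,
      on_line M (f u) (f (shift (shift u i) j)) ->
      on_line M (f (shift u i)) (f (shift u j)) ->
      lratio_is M (f (shift (shift u i) j)) (f u)
                (nu (shift (shift u i) j) / nu u) /\
      lratio_is M (f (shift u j)) (f (shift u i))
                (nu (shift u j) / nu (shift u i)).

End Defs.

From HB Require Import structures.
From mathcomp Require Import all_boot all_order all_algebra.
From mathcomp Require Import ring zify.
Set Implicit Arguments. Unset Strict Implicit. Unset Printing Implicit Defensive.
Import Order.TTheory GRing.Theory Num.Theory.
Local Open Scope ring_scope.

(* A non-degenerate quadrilateral (A,B,C,D) with diagonal point M
   is put in normal form: A - M, B - M are independent, C - M = r (A - M) and
   D - M = s (B - M) (diag_frame).  In these plane coordinates a quadrilateral
   whose edges are k, k/r, k/s, k/(rs) times AB, BC, AD, DC is again such a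
   frame and is dual to (A,B,C,D) (dual_frame, dual_frame_parallel);
   conversely the edge factors of any dual quadrilateral satisfy these
   relations (dual_edge_ratios).  The condition on nu says r = nu_ij/nu and
   s = nu_j/nu_i.  Closed 1-forms on Z^m with values in an abelian group are exact
   (closed_form_exact); applied to the multiplicative group of the field this
   writes suitable edge weights as 1/(nu nu_i) (edge_weights_potential).  A
   function constant along diagonals is constant on each colour class.  Given nu, integrating delta_i f / (nu nu_i) gives a dual net;
   given a dual net with delta_i f* = k delta_i f, writing k = 1/(nu nu_i)
   gives nu; and nu'/nu is constant along diagonals, which gives uniqueness. *)

Lemma int_step_ind (P : int -> Prop) :
  P 0 -> (forall n, P n <-> P (n + 1)) -> forall n, P n.
Proof.
move=> P0 PS; elim/int_rec => [//|n Pn|n Pn].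
  by have := (PS n).1 Pn; rewrite -PoszD addn1.
by apply/(PS _).2; rewrite -[n.+1]addn1 PoszD opprD addrNK.
Qed.

Lemma even_succ (x : int) : (2 %| x + 1)%Z = ~~ (2 %| x)%Z.
Proof. lia. Qed.

Section Lattice.
Variable m : nat.
Implicit Types (u v : 'rV[int]_m) (i j k : 'I_m).

(* The i-th unit vector e_i of Z^m (locked, so that entry-wise rewriting
   does not unfold it). *)
Definition unitv i : 'rV[int]_m := locked (delta_mx 0 i).

Lemma shiftE u i : shift u i = u + unitv i. Proof. by rewrite /unitv -lock. Qed.

Lemma shiftC u i j : shift (shift u i) j = shift (shift u j) i.
Proof. by rewrite !shiftE addrAC. Qed.

Lemma unitvE i l : unitv i 0 l = (i == l)%:R.
Proof. by rewrite /unitv -lock mxE eqxx eq_sym. Qed.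

Lemma unitv_on i : unitv i 0 i = 1.
Proof. by rewrite unitvE eqxx. Qed.

Lemma unitv_off i l : i != l -> unitv i 0 l = 0.
Proof. by rewrite unitvE => /negPf->. Qed.

Lemma black_shift u i : black (shift u i) = ~~ black u.
Proof.
rewrite /black shiftE -even_succ (bigD1 i) // [in RHS](bigD1 i) //= mxE unitv_on.
rewrite addrAC; congr (_ %| _ + _)%Z; congr (_ + _); apply: eq_bigr => l ne.
by rewrite mxE unitv_off 1?eq_sym // addr0.
Qed.

Lemma black0 : black (0 : 'rV[int]_m).
Proof. by rewrite /black big1 ?dvdz0 // => l _; rewrite mxE. Qed.

Definition supported_below (k : nat) u := forall l : 'I_m, (k <= l)%N -> u 0 l = 0.

Lemma supported_below_ind (P : 'rV[int]_m -> Prop) (k0 : nat) :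
  (forall u, supported_below k0 u -> P u) ->
  (forall k u, (k0 <= k)%N -> supported_below k.+1 u -> P u <-> P (u + unitv k)) ->
  forall u, P u.
Proof.
move=> Pbase Pstep.
suff Pk : forall n : nat, (k0 <= n <= m)%N -> forall u, supported_below n u -> P u.
  move=> u; case: (leqP k0 m) => hk0.
    by apply: (Pk m); rewrite ?hk0 ?leqnn // => l; rewrite leqNgt ltn_ord.
  by apply: Pbase => l hl; have := leq_ltn_trans hl (ltn_trans (ltn_ord l) hk0); rewrite ltnn.
elim=> [|n IH] /andP[hk0 hkm] u hu; first by apply: Pbase; move: hk0; rewrite leqn0 => /eqP->.
have [E|hne] := eqVneq k0 n.+1; first by apply: Pbase; rewrite E.
pose kk := Ordinal hkm.
have hk0' : (k0 <= kk)%N by rewrite -ltnS ltn_neqAle hne hk0.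
pose u' := u - u 0 kk *: unitv kk.
have line_supp (c : int) : supported_below n.+1 (u' + c *: unitv kk).
  move=> l hl; have kl : kk != l by rewrite -val_eqE neq_ltn hl.
  by rewrite !mxE unitv_off // !mulr0 subr0 addr0 hu // ltnW.
have Pline (c : int) : P (u' + c *: unitv kk).
  elim/int_step_ind: c => [|c]; last first.
    by rewrite scalerDl scale1r addrA; exact: Pstep hk0' (line_supp c).
  rewrite scale0r addr0; apply: IH; first by rewrite hk0' ltnW.
  move=> l hl; rewrite !mxE; have [<-|kl] := eqVneq kk l; first by rewrite unitv_on mulr1 subrr.
  by rewrite unitv_off // mulr0 subr0 hu // ltn_neqAle hl andbT; exact: kl.
by have := Pline (u 0 kk); rewrite subrK.
Qed.

Lemma lattice_ind (P : 'rV[int]_m -> Prop) :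
  P 0 -> (forall u i, P u <-> P (shift u i)) -> forall u, P u.
Proof.
move=> P0 Pstep; apply: (@supported_below_ind P 0) => [u hu|k u _ _]; last by rewrite -shiftE.
by have -> : u = 0 by apply/rowP => l; rewrite hu // mxE.
Qed.
End Lattice.

(* Discrete Poincare lemma: a closed 1-form on Z^m with values in an abelian
   group G -- a function w on oriented edges with w(u,i) + w(u+e_i,j) =
   w(u,j) + w(u+e_j,i) -- is exact, i.e. the increment of a potential. *)
Section Integration.
Variables (m : nat) (G : zmodType) (w : 'rV[int]_m -> 'I_m -> G).
Hypothesis w_closed : forall u i j, w u i + w (shift u i) j = w u j + w (shift u j) i.
Implicit Types (u v : 'rV[int]_m) (i j k : 'I_m).

Definition segment_sum v i (n : int) : G :=
  match n with
  | Posz n => \sum_(t < n) w (v + t%:Z *: unitv i) i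
  | Negz n => - \sum_(t < n.+1) w (v - t.+1%:Z *: unitv i) i
  end.

Lemma segment_sum0 v i : segment_sum v i 0 = 0.
Proof. exact: big_ord0. Qed.

Lemma segment_sumS v i n :
  segment_sum v i (n + 1) = segment_sum v i n + w (v + n *: unitv i) i.
Proof.
case: n => [n|[|n]].
- by rewrite -PoszD addn1 /segment_sum big_ord_recr.
- have -> : Negz 0 + 1 = 0 by [].
  by rewrite segment_sum0 /segment_sum big_ord1 NegzE scaleNr addNr.
- have -> : Negz n.+1 + 1 = Negz n by rewrite !NegzE -[n.+2]addn1 PoszD opprD addrNK.
  by rewrite /segment_sum [in RHS]big_ord_recr /= opprD -addrA NegzE scaleNr addNr addr0.
Qed.

Definition truncate (k : nat) u : 'rV[int]_m := \row_l (if (l < k)%N then u 0 l else 0).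

(* The potential: integrate along the staircase path 0 -> u, coordinate by
   coordinate. *)
Definition potential u : G := \sum_(k < m) segment_sum (truncate k u) k (u 0 k).

Lemma potential_step u i : supported_below i.+1 u ->
  potential (u + unitv i) = potential u + w u i.
Proof.
move=> hu; rewrite /potential (bigD1 i) //= [X in _ = X + _](bigD1 i) //=.
have trunc_i : truncate i (u + unitv i) = truncate i u.
  apply/rowP => l; rewrite !mxE; case: ifP => // hl.
  by rewrite unitv_off ?addr0 // neq_ltn hl orbT.
have coord_i : (u + unitv i) 0 i = u 0 i + 1 by rewrite mxE unitv_on.
have split_u : truncate i u + u 0 i *: unitv i = u.
  apply/rowP => l; rewrite !mxE.
  case: (ltngtP l i) => hl; last by rewrite (val_inj hl) unitv_on mulr1 add0r.
    by rewrite unitv_off ?mulr0 ?addr0 // neq_ltn hl orbT.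
  by rewrite unitv_off ?mulr0 ?add0r ?hu // neq_ltn hl.
rewrite trunc_i coord_i segment_sumS split_u addrAC; congr (_ + _ + _).
apply: eq_bigr => k hk; rewrite mxE unitv_off 1?eq_sym // addr0.
case: (ltngtP k i) => hki; last by move: hk; rewrite (val_inj hki) eqxx.
  congr segment_sum; apply/rowP => l; rewrite !mxE; case: ifP => // hl.
  by rewrite unitv_off ?addr0 // neq_ltn (ltn_trans hl hki) orbT.
by rewrite hu // !segment_sum0.
Qed.

(* Closedness propagates this to arbitrary steps, coordinate by coordinate. *)
Lemma closed_form_exact : exists F : 'rV[int]_m -> G,
  forall u i, F (shift u i) = F u + w u i.
Proof.
exists potential => u i; rewrite shiftE; move: u.
apply: (@supported_below_ind _ (fun u => potential (u + unitv i) = potential u + w u i) i.+1).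
  by move=> u; apply: potential_step.
move=> k v hik hv.
have hvi : supported_below k.+1 (v + unitv i).
  by move=> l hl; rewrite mxE hv // unitv_off ?addr0 // neq_ltn (ltn_trans hik hl).
have step_k := potential_step hv; have step_ik := potential_step hvi.
rewrite (addrAC v (unitv k)) step_ik step_k -addrA -!shiftE -w_closed addrA shiftE.
by split=> [->//|]; apply: addIr.
Qed.
End Integration.

(* The multiplicative group F^x of a field, written additively so that the
   integration lemma applies to multiplicative 1-forms. *)
Definition nonzero (F : fieldType) := {x : F | x != 0}.
HB.instance Definition _ (F : fieldType) := Choice.on (nonzero F).

Section NonzeroGroup.
Variable F : fieldType.
Implicit Types x y z : nonzero F.

Definition nz_one : nonzero F := exist _ 1 (oner_neq0 F).
Definition nz_mul x y : nonzero F := exist _ (sval x * sval y) (mulf_neq0 (svalP x) (svalP y)).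
Definition nz_inv x : nonzero F := exist _ (sval x)^-1 (invr_neq0 (svalP x)).

Lemma nz_mulA : associative nz_mul. Proof. by move=> x y z; apply: val_inj; exact: mulrA. Qed.
Lemma nz_mulC : commutative nz_mul. Proof. by move=> x y; apply: val_inj; exact: mulrC. Qed.
Lemma nz_mul1 : left_id nz_one nz_mul. Proof. by move=> x; apply: val_inj; exact: mul1r. Qed.
Lemma nz_mulV : left_inverse nz_one nz_inv nz_mul.
Proof. by move=> x; apply: val_inj; exact: mulVf (svalP x). Qed.
End NonzeroGroup.

HB.instance Definition _ (F : fieldType) :=
  GRing.isZmodule.Build (nonzero F) (@nz_mulA F) (@nz_mulC F) (@nz_mul1 F) (@nz_mulV F).

Section EdgePotential.
Variables (m : nat) (F : fieldType) (k : 'rV[int]_m -> 'I_m -> F).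
Hypothesis k_neq0 : forall u i, k u i != 0.
Hypothesis k_closed : forall u i j, k u i * k (shift u j) i = k u j * k (shift u i) j.

(* Nonzero edge weights k with k(u,i) k(u+e_j,i) = k(u,j) k(u+e_i,j) are of
   the form k(u,i) = 1 / (nu(u) nu(u+e_i)): on black vertices k, on white
   vertices 1/k is a closed multiplicative 1-form, whose potential gives nu. *)
Lemma edge_weights_potential : exists nu : 'rV[int]_m -> F,
  (forall u, nu u != 0) /\ forall u i, nu u * nu (shift u i) = (k u i)^-1.
Proof.
pose kz u i : nonzero F := exist _ (k u i) (k_neq0 u i).
pose om u i := if black u then kz u i else - kz u i.
have om_closed u i j : om u i + om (shift u i) j = om u j + om (shift u j) i.
  apply: val_inj; have := k_closed u i j; rewrite /om !black_shift /=.
  have k1 := k_neq0 u i; have k2 := k_neq0 (shift u i) j.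
  have k3 := k_neq0 u j; have k4 := k_neq0 (shift u j) i.
  by case: (black u) => /= E; field: E; rewrite ?k1 ?k2 ?k3 ?k4.
have [psi psiP] := closed_form_exact om_closed.
exists (fun u => if black u then sval (psi u) else (sval (psi u))^-1); split.
  by move=> u; case: (black u); rewrite ?invr_neq0 // (svalP (psi u)).
move=> u i; rewrite black_shift psiP /om; have := svalP (psi u); have := k_neq0 u i.
by case: (black u) => /= h1 h2; field; rewrite h1 h2.
Qed.
End EdgePotential.

Section TwoColouring.
Variable m : nat.
Hypothesis m_ge2 : (2 <= m)%N.

Lemma other_direction (i : 'I_m) : exists j : 'I_m, j != i.
Proof.
have m_gt0 : (0 < m)%N by apply: leq_trans m_ge2.
have [<-|ne] := eqVneq (Ordinal m_gt0) i; last by exists (Ordinal m_gt0).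
by exists (Ordinal m_ge2); rewrite -val_eqE.
Qed.

Lemma diagonal_invariant_two_colour (T : Type) (g : 'rV[int]_m -> T) :
  (forall u i j, i != j -> g (shift u j) = g (shift u i)) ->
  (forall u i j, i != j -> g (shift (shift u i) j) = g u) ->
  exists w0, forall u, g u = if black u then g 0 else g w0.
Proof.
move=> g_diag1 g_diag2.
have [i0 _] := other_direction (Ordinal m_ge2).
pose h u := g (shift u i0).
have g_shift u i : g (shift u i) = h u.
  by have [->//|ne] := eqVneq i i0; rewrite /h (g_diag1 _ _ _ ne).
have h_shift u i : h (shift u i) = g u.
  have [->|ne] := eqVneq i i0; last by rewrite /h g_diag2.
  have [j ne] := other_direction i0.
  by rewrite /h (g_diag1 _ _ _ ne) g_diag2 // eq_sym.
exists (shift 0 i0).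
suff colour u : g u = (if black u then g 0 else h 0) /\ h u = (if black u then h 0 else g 0).
  by move=> u; have [-> _] := colour u.
elim/lattice_ind: u => [|u i]; first by rewrite black0.
by rewrite black_shift g_shift h_shift; case: (black u) => /=; split=> -[-> ->].
Qed.
End TwoColouring.

Ltac field_nz := field; repeat (apply/andP; split); try assumption.

Ltac vector_eq := apply/rowP => ?; rewrite !mxE; field_nz.

Section PlaneGeometry.
Variables (R : realFieldType) (N : nat).
Notation pt := 'rV[R]_N.
Implicit Types (M X Y a b : pt).

Definition indep a b := forall x y : R, x *: a + y *: b = 0 -> x = 0 /\ y = 0.

Lemma indep_comb_neq0 a b (x y : R) :
  indep a b -> (x != 0) || (y != 0) -> x *: a + y *: b != 0.
Proof. by move=> hab nz; apply/eqP => /hab[x0 y0]; move: nz; rewrite x0 y0 eqxx. Qed.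

Lemma indep_neq0l a b : indep a b -> a != 0.
Proof.
move=> hab; apply/eqP => a0; have := hab 1 0.
by rewrite a0 scaler0 scale0r addr0 => /(_ erefl) [/eqP]; rewrite oner_eq0.
Qed.

Lemma indep_neq0r a b : indep a b -> b != 0.
Proof.
move=> hab; apply/eqP => b0; have := hab 0 1.
by rewrite b0 scaler0 scale0r addr0 => /(_ erefl) [_ /eqP]; rewrite oner_eq0.
Qed.

Lemma indep_scale a b (x y : R) : indep a b -> x != 0 -> y != 0 -> indep (x *: b) (y *: a).
Proof.
move=> hab hx hy c d E.
have [dy0 cx0] : d * y = 0 /\ c * x = 0 by apply: hab; rewrite addrC -!scalerA.
by split; [apply: (mulIf hx) | apply: (mulIf hy)]; rewrite mul0r.
Qed.

Lemma scale_cancel a (c d : R) : a != 0 -> c *: a = d *: a -> c = d.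
Proof.
move=> a_neq0 E; apply/eqP; rewrite -subr_eq0.
by have /eqP := scalerBl c d a; rewrite E subrr scaler_eq0 (negPf a_neq0) orbF.
Qed.

Lemma rank1_proportional X Y : (\rank (col_mx X Y) <= 1)%N -> X != 0 ->
  exists c : R, Y = c *: X.
Proof.
move=> rk X_neq0.
have sX : (X <= col_mx X Y)%MS by have := submx_refl (col_mx X Y); rewrite col_mx_sub => /andP[].
have rX : \rank X = 1%N by apply/eqP; rewrite eqn_leq rank_leq_row lt0n mxrank_eq0.
have [_ eqXY] := mxrank_leqif_sup sX.
have : (col_mx X Y <= X)%MS by rewrite -eqXY eqn_leq (mxrankS sX) rX rk.
rewrite col_mx_sub => /andP[_ /submxP[c ->]].
by exists (c 0 0); rewrite {1}(mx11_scalar c) mul_scalar_mx.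
Qed.

Lemma proportional_rank1 X Y a (c d : R) : X = c *: a -> Y = d *: a ->
  (\rank (col_mx X Y) <= 1)%N.
Proof.
move=> -> ->; apply: leq_trans (rank_leq_row a).
by apply: mxrankS; rewrite col_mx_sub !scalemx_sub.
Qed.

Definition coord M a b (x y : R) : pt := M + x *: a + y *: b.

Lemma coord_sub M a b (x y x' y' : R) :
  coord M a b x y - coord M a b x' y' = (x - x') *: a + (y - y') *: b.
Proof. by rewrite /coord; vector_eq. Qed.

Lemma coord_neq M a b (x y x' y' : R) : indep a b -> (x != x') || (y != y') ->
  coord M a b x y != coord M a b x' y'.
Proof. by move=> hab nz; rewrite -subr_eq0 coord_sub indep_comb_neq0 // !subr_eq0. Qed.

Lemma coord_noncollinear M a b (x1 y1 x2 y2 x3 y3 d : R) : indep a b ->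
  d = (x2 - x1) * (y3 - y1) - (x3 - x1) * (y2 - y1) -> d != 0 ->
  ~ collinear3 (coord M a b x1 y1) (coord M a b x2 y2) (coord M a b x3 y3).
Proof.
rewrite /collinear3 !coord_sub => hab -> /negP det_neq0 rk; apply: det_neq0.
have [E|] := eqVneq ((x2 - x1) *: a + (y2 - y1) *: b) 0.
  by have [-> ->] := hab _ _ E; rewrite mul0r mulr0 subrr.
move=> /(rank1_proportional rk) [c Ec].
have [/eqP h1 /eqP h2] : x3 - x1 - c * (x2 - x1) = 0 /\ y3 - y1 - c * (y2 - y1) = 0.
  apply: hab; rewrite -[RHS](subrr ((x3 - x1) *: a + (y3 - y1) *: b)) {2}Ec.
  by vector_eq.
move: h1 h2; rewrite !subr_eq0 => /eqP-> /eqP->.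
by rewrite mulrCA mulrA.
Qed.

Lemma coord_planar M a b (x1 y1 x2 y2 x3 y3 x4 y4 : R) :
  planar4 (coord M a b x1 y1) (coord M a b x2 y2) (coord M a b x3 y3) (coord M a b x4 y4).
Proof.
rewrite /planar4 !coord_sub; apply: leq_trans (rank_leq_row (col_mx a b)).
have [sa sb] : (a <= col_mx a b)%MS /\ (b <= col_mx a b)%MS.
  by apply/andP; rewrite -col_mx_sub submx_refl.
by apply: mxrankS; rewrite !col_mx_sub !addmx_sub ?scalemx_sub.
Qed.
End PlaneGeometry.

Section DiagonalFrame.
Variables (R : realFieldType) (N : nat).
Notation pt := 'rV[R]_N.
Implicit Types (A B C D M : pt).

Definition diag_frame A B C D M (r s : R) : Prop :=
  [/\ indep (A - M) (B - M), lratio_is M C A r, lratio_is M D B s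
    & [/\ r != 0, r != 1, s != 0 & s != 1]].

Lemma sub_eq_add (X Y Z : pt) : X - Y = Z -> X = Y + Z.
Proof. by move=> <-; rewrite addrC subrK. Qed.

Lemma sub_path (X Y Z : pt) : X - Z = (X - Y) + (Y - Z).
Proof. by rewrite addrA subrK. Qed.

Lemma lratio_point M P Q (r : R) : lratio_is M P Q r -> P = M + r *: (Q - M).
Proof. exact: sub_eq_add. Qed.

(* Every diagonal frame is a planar non-degenerate quadrilateral whose
   diagonals meet at M: in the coordinates along A - M, B - M its vertices are
   (1,0), (0,1), (r,0), (0,s) and M is (0,0). *)
Lemma frame_quad A B C D M r s : diag_frame A B C D M r s ->
  [/\ planar4 A B C D, nondeg_quad A B C D, on_line M A C & on_line M B D].
Proof.
case=> hab /lratio_point EC /lratio_point ED [r0 r1 s0 s1].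
have EA : A = coord M (A - M) (B - M) 1 0 by rewrite /coord; vector_eq.
have EB : B = coord M (A - M) (B - M) 0 1 by rewrite /coord; vector_eq.
have EM : M = coord M (A - M) (B - M) 0 0 by rewrite /coord; vector_eq.
rewrite EC ED; move: (A - M) (B - M) hab EA EB EM => a b hab -> -> EM.
have -> : M + r *: a = coord M a b r 0 by rewrite /coord; vector_eq.
have -> : M + s *: b = coord M a b 0 s by rewrite /coord; vector_eq.
have [r0' r1' s0' s1'] : [/\ 0 != r, 1 != r, 0 != s & 1 != s].
  by rewrite ![_ == r]eq_sym ![_ == s]eq_sym.
have n01 : (0 : R) != 1 by rewrite eq_sym oner_neq0.
have onAC : on_line M (coord M a b 1 0) (coord M a b r 0).
  by exists (1 - r)^-1; rewrite /coord; vector_eq; rewrite subr_eq0.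
have onBD : on_line M (coord M a b 0 1) (coord M a b 0 s).
  by exists (1 - s)^-1; rewrite /coord; vector_eq; rewrite subr_eq0.
split=> //; first exact: coord_planar.
split.
- by split; [ | | | split]; apply: coord_neq;
    rewrite // ?oner_neq0 ?r0 ?r0' ?r1' ?s0 ?s0' ?s1' ?orbT.
- split.
  + by apply: (coord_noncollinear (d := 1 - r)) => //; [ring | rewrite subr_eq0].
  + by apply: (coord_noncollinear (d := 1 - s)) => //; [ring | rewrite subr_eq0].
  + by apply: (coord_noncollinear (d := (r - 1) * s)) => //; [ring | rewrite mulf_neq0 ?subr_eq0].
  + by apply: (coord_noncollinear (d := r * (s - 1))) => //; [ring | rewrite mulf_neq0 ?subr_eq0].
- exists M; split=> //.
  by split; rewrite {1}EM; apply: coord_neq; rewrite // ?n01 ?r0' ?s0' ?orbT.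
Qed.

(* If C lies on the line MA, then A - M and B - M are independent unless
   B lies on that line too, i.e. unless A, B, C are collinear. *)
Lemma indep_of_noncollinear A B C M (r : R) :
  ~ collinear3 A B C -> A != M -> lratio_is M C A r -> indep (A - M) (B - M).
Proof.
move=> nABC AM /lratio_point EC x y E.
have [y0|y_neq0] := eqVneq y 0.
  move: E; rewrite y0 scale0r addr0 => /eqP; rewrite scaler_eq0 subr_eq0 (negPf AM) orbF.
  by move/eqP.
case: nABC; rewrite /collinear3.
apply: (proportional_rank1 (a := A - M) (c := - (x / y) - 1) (d := r - 1)); last first.
  by rewrite EC; vector_eq.
have EB : B - M = - (x / y) *: (A - M) + y^-1 *: (x *: (A - M) + y *: (B - M)) by vector_eq.
rewrite E scaler0 addr0 in EB.
by rewrite -[B](subrK M) EB; vector_eq.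
Qed.

Lemma frame_of_nondeg A B C D : nondeg_quad A B C D ->
  exists M r s, [/\ diag_frame A B C D M r s, on_line M A C & on_line M B D].
Proof.
case=> [[_ AC _ [_ BD _]] [nABC _ _ _] [M [[t Et] [t' Et'] [MA MB MC MD]]]].
have t_neq0 : t != 0 by apply: contraNneq MA => t0; rewrite Et t0 scale0r addr0.
have t'_neq0 : t' != 0 by apply: contraNneq MB => t0; rewrite Et' t0 scale0r addr0.
have hC : lratio_is M C A ((t - 1) / t) by rewrite /lratio_is Et; vector_eq.
have hD : lratio_is M D B ((t' - 1) / t') by rewrite /lratio_is Et'; vector_eq.
exists M, ((t - 1) / t), ((t' - 1) / t'); split; [split=> // | exists t | exists t'] => //.
  by apply: indep_of_noncollinear hC; rewrite // eq_sym.
move: hC hD => /lratio_point EC /lratio_point ED.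
split.
- by apply: contraNneq MC => r0; rewrite EC r0 scale0r addr0.
- by apply: contraNneq AC => r1; rewrite EC r1 scale1r addrC subrK.
- by apply: contraNneq MD => s0; rewrite ED s0 scale0r addr0.
- by apply: contraNneq BD => s1; rewrite ED s1 scale1r addrC subrK.
Qed.

Lemma frame_center_unique A B C D M M' r s : diag_frame A B C D M r s ->
  on_line M' A C -> on_line M' B D -> M' = M.
Proof.
case=> hab /lratio_point EC /lratio_point ED _ [t Et] [t' Et'].
have [x0 _] : 1 + t * (r - 1) = 0 /\ - (1 + t' * (s - 1)) = 0.
  by apply: hab; rewrite -(subrr M') {1}Et Et' EC ED; vector_eq.
rewrite Et (_ : A + t *: (C - A) = M + (1 + t * (r - 1)) *: (A - M)); last by rewrite EC; vector_eq.
by rewrite x0 scale0r addr0.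
Qed.

Lemma frame_ratio_unique A B C D M r s (r' s' : R) : diag_frame A B C D M r s ->
  lratio_is M C A r' -> lratio_is M D B s' -> r' = r /\ s' = s.
Proof.
case=> hab hC hD _ hC' hD'; split.
  by apply: (scale_cancel (indep_neq0l hab)); rewrite -hC -hC'.
by apply: (scale_cancel (indep_neq0r hab)); rewrite -hD -hD'.
Qed.
End DiagonalFrame.

Section Duality.
Variables (R : realFieldType) (N : nat).
Notation pt := 'rV[R]_N.
Implicit Types (A B C D M As Bs Cs Ds : pt).

Lemma frame_dual_closes A B C D M r s (k : R) : diag_frame A B C D M r s ->
  k *: (B - A) + (k / r) *: (C - B) = (k / s) *: (D - A) + (k / (r * s)) *: (C - D).
Proof. by case=> _ /lratio_point-> /lratio_point-> [r0 _ s0 _]; vector_eq. Qed.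

Section DualQuad.
Variables (A B C D M As Bs Cs Ds : pt) (r s k : R).
Hypothesis frame : diag_frame A B C D M r s.
Hypothesis k_neq0 : k != 0.
Hypothesis dualAB : Bs - As = k *: (B - A).
Hypothesis dualBC : Cs - Bs = (k / r) *: (C - B).
Hypothesis dualAD : Ds - As = (k / s) *: (D - A).

Lemma dual_frame : diag_frame As Bs Cs Ds (As + k *: (B - M)) r^-1 s^-1.
Proof.
case: frame => hab /lratio_point EC /lratio_point ED [r0 r1 s0 s1].
move/sub_eq_add: dualAB => EBs; move/sub_eq_add: dualBC => ECs; move/sub_eq_add: dualAD => EDs.
have EA' : As - (As + k *: (B - M)) = (- k) *: (B - M) by vector_eq.
have EB' : Bs - (As + k *: (B - M)) = (- k) *: (A - M) by rewrite EBs; vector_eq.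
split; first by rewrite EA' EB'; apply: indep_scale; rewrite // oppr_eq0.
- by rewrite /lratio_is ECs EBs EC; vector_eq.
- by rewrite /lratio_is EDs EBs ED; vector_eq.
- by split; rewrite ?invr_neq0 ?invr_eq1.
Qed.

Lemma dual_frame_parallel : dual_quad A B C D As Bs Cs Ds.
Proof.
have [_ [[AB AC AD [BC BD CD]] _ _] _ _] := frame_quad frame.
case: frame => _ /lratio_point EC /lratio_point ED [r0 r1 s0 s1].
move/sub_eq_add: dualAB => EBs; move/sub_eq_add: dualBC => ECs; move/sub_eq_add: dualAD => EDs.
have par (X Y : pt) (c : R) : c != 0 -> Y != 0 -> X = c *: Y -> parallel X Y.
  by move=> c0 Y0 E; split; [rewrite E scaler_eq0 negb_or c0 | split=> //; exists c].
have nz (X Y : pt) : X != Y -> Y - X != 0 by rewrite subr_eq0 eq_sym.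
have nzq (x y : R) : x != 0 -> y != 0 -> x / y != 0 by move=> x0 y0; rewrite mulf_neq0 ?invr_neq0.
have [r1' s1'] : r - 1 != 0 /\ s - 1 != 0 by rewrite !subr_eq0.
split.
- by apply: (par _ _ k) => //; exact: nz.
- by apply: (par _ _ (k / r)); [exact: nzq | exact: nz |].
- apply: (par _ _ (k / (r * s))); [by rewrite nzq ?mulf_neq0 | exact: nz |].
  by rewrite ECs EBs EDs EC ED; vector_eq.
- apply: (par _ _ (k / s)); [exact: nzq | by apply: nz; rewrite eq_sym |].
  by rewrite EDs; vector_eq.
split.
- apply: (par _ _ (k * (r - 1) / (r * (s - 1)))); [by rewrite nzq ?mulf_neq0 | exact: nz |].
  by rewrite ECs EBs EC ED; vector_eq.
- apply: (par _ _ (k * (s - 1) / (s * (r - 1)))); [by rewrite nzq ?mulf_neq0 | exact: nz |].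
  by rewrite EDs EBs EC ED; vector_eq.
Qed.
End DualQuad.

Lemma dual_edge_ratios A B C D M As Bs Cs Ds (r s k1 k2 k3 k4 mu eta : R) :
  diag_frame A B C D M r s ->
  Bs - As = k1 *: (B - A) -> Cs - Bs = k2 *: (C - B) ->
  Cs - Ds = k3 *: (C - D) -> Ds - As = k4 *: (D - A) ->
  Cs - As = mu *: (D - B) -> Ds - Bs = eta *: (C - A) ->
  [/\ k1 = k2 * r, k4 = k3 * r & k1 = k4 * s].
Proof.
case=> hab /lratio_point EC /lratio_point ED _ E1 E2 E3 E4 E5 E6.
have [/eqP h1 _] : k2 * r - k1 = 0 /\ k1 - k2 - mu * (s - 1) = 0.
  apply: hab; rewrite -(subrr (Cs - As)) {1}(sub_path Cs Bs As) E1 E2 E5 EC ED.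
  by vector_eq.
have [/eqP h2 _] : k3 * r - k4 = 0 /\ k4 * s - k3 * s - mu * (s - 1) = 0.
  apply: hab; rewrite -(subrr (Cs - As)) {1}(sub_path Cs Ds As) E3 E4 E5 EC ED.
  by vector_eq.
have [_ /eqP h3] : eta * (r - 1) - k1 + k4 = 0 /\ k1 - k4 * s = 0.
  apply: hab; rewrite -(subrr (Ds - As)) {1}(sub_path Ds Bs As) E1 E4 E6 EC ED.
  by vector_eq.
move: h1 h2 h3; rewrite !subr_eq0 => /eqP h1 /eqP h2 /eqP h3.
by split; rewrite ?h1 ?h2.
Qed.
End Duality.

Section KoenigsNets.
Variables (R : realFieldType) (N m : nat) (f : 'rV[int]_m -> 'rV[R]_N).
Hypothesis f_Qnet : Qnet f.
Implicit Types (u : 'rV[int]_m) (i j : 'I_m) (nu : 'rV[int]_m -> R).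

Lemma Qnet_frame u i j : i != j -> exists M r s,
  [/\ diag_frame (f u) (f (shift u i)) (f (shift (shift u i) j)) (f (shift u j)) M r s,
      on_line M (f u) (f (shift (shift u i) j)) & on_line M (f (shift u i)) (f (shift u j))].
Proof. by move=> ij; apply: frame_of_nondeg; have [_] := f_Qnet u ij. Qed.

Lemma nu_cond_ratios nu u i j M r s : nu_cond f nu -> i != j ->
  diag_frame (f u) (f (shift u i)) (f (shift (shift u i) j)) (f (shift u j)) M r s ->
  on_line M (f u) (f (shift (shift u i) j)) -> on_line M (f (shift u i)) (f (shift u j)) ->
  nu (shift (shift u i) j) / nu u = r /\ nu (shift u j) / nu (shift u i) = s.
Proof.
move=> [_ nuP] ij fr onAC onBD; have [hC hD] := nuP u i j ij M onAC onBD.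
exact: frame_ratio_unique fr hC hD.
Qed.

Section DualFromNu.
Variable nu : 'rV[int]_m -> R.
Hypothesis nuC : nu_cond f nu.

Definition nu_dual_edge u i : 'rV[R]_N :=
  (nu u * nu (shift u i))^-1 *: (f (shift u i) - f u).

Lemma nu_dual_edges u i j M r s : i != j ->
  diag_frame (f u) (f (shift u i)) (f (shift (shift u i) j)) (f (shift u j)) M r s ->
  on_line M (f u) (f (shift (shift u i) j)) -> on_line M (f (shift u i)) (f (shift u j)) ->
  let k := (nu u * nu (shift u i))^-1 in
  [/\ nu_dual_edge (shift u i) j = (k / r) *: (f (shift (shift u i) j) - f (shift u i)),
      nu_dual_edge u j = (k / s) *: (f (shift u j) - f u) &
      nu_dual_edge (shift u j) i = (k / (r * s)) *: (f (shift (shift u i) j) - f (shift u j))].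
Proof.
move=> ij fr onAC onBD k; have [<- <-] := nu_cond_ratios nuC ij fr onAC onBD.
have n1 := nuC.1 u; have n2 := nuC.1 (shift u i).
have n3 := nuC.1 (shift u j); have n4 := nuC.1 (shift (shift u i) j).
by rewrite /nu_dual_edge /k (shiftC u j i); split; congr (_ *: _); field_nz.
Qed.

Lemma nu_dual_edge_closed u i j :
  nu_dual_edge u i + nu_dual_edge (shift u i) j = nu_dual_edge u j + nu_dual_edge (shift u j) i.
Proof.
have [->//|ij] := eqVneq i j.
have [M [r [s [fr onAC onBD]]]] := Qnet_frame u ij.
have [-> -> ->] := nu_dual_edges ij fr onAC onBD.
exact: frame_dual_closes fr.
Qed.

(* Integrating the dual edges gives a dual net. *)
Lemma Koenigs_of_nu : Koenigs f.
Proof.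
have [F FP] := closed_form_exact nu_dual_edge_closed.
have F_edge u i : F (shift u i) - F u = nu_dual_edge u i by rewrite FP addrAC subrr add0r.
have dual_quads u i j : i != j ->
    [/\ planar4 (F u) (F (shift u i)) (F (shift (shift u i) j)) (F (shift u j)),
        nondeg_quad (F u) (F (shift u i)) (F (shift (shift u i) j)) (F (shift u j)) &
        dual_quad (f u) (f (shift u i)) (f (shift (shift u i) j)) (f (shift u j))
          (F u) (F (shift u i)) (F (shift (shift u i) j)) (F (shift u j))].
  move=> ij; have [M [r [s [fr onAC onBD]]]] := Qnet_frame u ij.
  have [EBC EAD _] := nu_dual_edges ij fr onAC onBD.
  have k_neq0 : (nu u * nu (shift u i))^-1 != 0 by rewrite invr_neq0 ?mulf_neq0 ?nuC.1.
  have AB := F_edge u i; have BC := F_edge (shift u i) j; have AD := F_edge u j.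
  rewrite EBC in BC; rewrite EAD in AD.
  have [planar nondeg _ _] := frame_quad (dual_frame fr k_neq0 AB BC AD).
  by split=> //; exact: dual_frame_parallel fr k_neq0 AB BC AD.
by exists F; split=> u i j /(dual_quads u i j)[].
Qed.
End DualFromNu.

Section NuFromDual.
Hypothesis m_ge2 : (2 <= m)%N.
Variable fs : 'rV[int]_m -> 'rV[R]_N.
Hypothesis fs_dual : forall u i j, i != j ->
  dual_quad (f u) (f (shift u i)) (f (shift (shift u i) j)) (f (shift u j))
            (fs u) (fs (shift u i)) (fs (shift (shift u i) j)) (fs (shift u j)).

Lemma dual_ratio_exists u i :
  exists k : R, (k != 0) && (fs (shift u i) - fs u == k *: (f (shift u i) - f u)).
Proof.
have [j ji] := other_direction m_ge2 i; rewrite eq_sym in ji.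
have [[fs_AB [_ [k Ek]]] _ _ _ _] := fs_dual u ji.
by exists k; rewrite Ek eqxx andbT; apply: contraNneq fs_AB => k0; rewrite Ek k0 scale0r.
Qed.

Definition dual_ratio u i : R := xchoose (dual_ratio_exists u i).

Lemma dual_ratioP u i :
  dual_ratio u i != 0 /\ fs (shift u i) - fs u = dual_ratio u i *: (f (shift u i) - f u).
Proof. by have /andP[? /eqP] := xchooseP (dual_ratio_exists u i). Qed.

Lemma dual_ratio_frame u i j M r s : i != j ->
  diag_frame (f u) (f (shift u i)) (f (shift (shift u i) j)) (f (shift u j)) M r s ->
  [/\ dual_ratio u i = dual_ratio (shift u i) j * r,
      dual_ratio u j = dual_ratio (shift u j) i * r &
      dual_ratio u i = dual_ratio u j * s].
Proof.
move=> ij fr; have [_ _ _ _ [[_ [_ [mu Emu]]] [_ [_ [eta Eeta]]]]] := fs_dual u ij.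
have [_ Eji] := dual_ratioP (shift u j) i; rewrite -shiftC in Eji.
exact: dual_edge_ratios fr (dual_ratioP u i).2 (dual_ratioP (shift u i) j).2 Eji
  (dual_ratioP u j).2 Emu Eeta.
Qed.

Lemma dual_ratio_closed u i j :
  dual_ratio u i * dual_ratio (shift u j) i = dual_ratio u j * dual_ratio (shift u i) j.
Proof.
have [->//|ij] := eqVneq i j.
have [M [r [s [fr _ _]]]] := Qnet_frame u ij.
by have [-> -> _] := dual_ratio_frame ij fr; ring.
Qed.

(* Writing dual_ratio as 1/(nu nu_i), the frame ratios become nu_ij/nu and
   nu_j/nu_i. *)
Lemma nu_of_dual : exists nu, nu_cond f nu.
Proof.
have k_neq0 u i := (dual_ratioP u i).1.
have [nu [nu_neq0 nuP]] := edge_weights_potential k_neq0 dual_ratio_closed.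
have ratioE v l : dual_ratio v l = (nu v * nu (shift v l))^-1 by rewrite nuP invrK.
exists nu; split=> // u i j ij M onAC onBD.
have [M0 [r [s [fr _ _]]]] := Qnet_frame u ij.
have -> := frame_center_unique fr onAC onBD.
have [kr _ ks] := dual_ratio_frame ij fr.
have [_ /lratio_point-> /lratio_point-> _] := fr.
suff [-> ->] : nu (shift (shift u i) j) / nu u = r /\ nu (shift u j) / nu (shift u i) = s.
  by split; rewrite /lratio_is addrAC subrr add0r.
have n1 := nu_neq0 u; have n2 := nu_neq0 (shift u i).
have n3 := nu_neq0 (shift u j); have n4 := nu_neq0 (shift (shift u i) j).
have k2 := k_neq0 (shift u i) j; have k4 := k_neq0 u j.
have -> : r = dual_ratio u i / dual_ratio (shift u i) j by rewrite kr; field_nz.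
have -> : s = dual_ratio u i / dual_ratio u j by rewrite ks; field_nz.
by rewrite !ratioE; split; field_nz.
Qed.
End NuFromDual.

Lemma nu_of_Koenigs : (2 <= m)%N -> Koenigs f -> exists nu, nu_cond f nu.
Proof. by move=> m_ge2 [fs [_ fs_dual]]; exact: nu_of_dual fs_dual. Qed.

(* nu is unique up to one constant factor on black and one on white
   vertices: nu'/nu agrees at the ends of each diagonal. *)
Lemma nu_cond_unique nu nu' : (2 <= m)%N -> nu_cond f nu ->
  nu_cond f nu' <-> exists cb cw : R, [/\ cb != 0, cw != 0 &
    forall u, nu' u = (if black u then cb else cw) * nu u].
Proof.
move=> m_ge2 nuC; have nu_neq0 := nuC.1.
have cancel_factor (c x y : R) : c != 0 -> y != 0 -> c * x / (c * y) = x / y.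
  by move=> c0 y0; field_nz.
split=> [nu'C | [cb [cw [cb0 cw0 nu'E]]]].
  pose c u := nu' u / nu u.
  have c_diag u i j : i != j -> c (shift (shift u i) j) = c u /\ c (shift u j) = c (shift u i).
    move=> ij; have [M [r [s [fr onAC onBD]]]] := Qnet_frame u ij.
    have [Er Es] := nu_cond_ratios nuC ij fr onAC onBD.
    have [] := nu_cond_ratios nu'C ij fr onAC onBD; rewrite -{}Er -{}Es => E1 E2.
    have n1 := nu_neq0 u; have n2 := nu_neq0 (shift u i).
    have n3 := nu_neq0 (shift u j); have n4 := nu_neq0 (shift (shift u i) j).
    have n1' := nu'C.1 u; have n2' := nu'C.1 (shift u i).
    rewrite /c -[nu' (shift (shift u i) j)](divfK n1') -[nu' (shift u j)](divfK n2') E1 E2.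
    by split; field_nz.
  have [w0 cE] := diagonal_invariant_two_colour m_ge2
    (fun u i j ij => (c_diag u i j ij).2) (fun u i j ij => (c_diag u i j ij).1).
  have c_neq0 u : c u != 0 by rewrite mulf_neq0 ?invr_neq0 // nu'C.1.
  exists (c 0), (c w0); split=> // u.
  by rewrite -cE divfK.
split=> [u | u i j ij M onAC onBD]; first by rewrite nu'E mulf_neq0 //; case: (black u).
have [hC hD] := nuC.2 u i j ij M onAC onBD.
rewrite !nu'E !black_shift negbK.
by case: (black u); rewrite !cancel_factor.
Qed.
End KoenigsNets.

Unset Implicit Arguments.

Theorem mainTheorem7 (R : realFieldType) (N m : nat) (HN : (3 <= N)%N) (Hm : (2 <= m)%N)
  (f : 'rV[int]_m -> 'rV[R]_N) (Hf : Qnet f) :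
  (Koenigs f <-> exists nu : 'rV[int]_m -> R, nu_cond f nu) /\
  (forall nu : 'rV[int]_m -> R, nu_cond f nu ->
     forall nu' : 'rV[int]_m -> R,
       nu_cond f nu' <->
       exists cb cw : R, [/\ cb != 0, cw != 0 &
         forall u, nu' u = (if black u then cb else cw) * nu u]).
Proof.
split; first by split=> [|[nu]]; [exact: nu_of_Koenigs | exact: Koenigs_of_nu].
by move=> nu nuC nu'; exact: nu_cond_unique.
Qed.
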